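(* Let $X$ be a finite set, $\mathcal{T}_X$ the full transformation semigroup on $X$, and $(\mathcal{T}_X,\leq)$ the ordered full transformation semigroup with the natural partial order. For $f,g\in\mathcal{T}_X$, $f\,\mathscr{L}\,g$ in the ordered semigroup $(\mathcal{T}_X,\leq)$ if and only if $f\,\mathscr{L}\,g$ in the semigroup $\mathcal{T}_X$.
   Context: $\mathcal{T}_X$ is the semigroup of all maps $X\to X$ under composition, with maps written on the right and composed left to right, so that $\operatorname{Im}(\alpha g)\subseteq\operatorname{Im} g$. The natural partial order: $f\leq g$ iff $f\mathcal{T}_X^1\subseteq g\mathcal{T}_X^1$ and $f=\alpha f=\alpha g$ for some $\alpha\in\mathcal{T}_X$; with it, $(\mathcal{T}_X,\leq)$ is a regular ordered semigroup. In an ordered semigroup $S$, $a\,\mathscr{L}\,b$ iff $(a\cup Sa]=(b\cup Sb]$, where $(A]=\{x: x\leq a\text{ for some }a\in A\}$. In the plain semigroup $\mathcal{T}_X$, $\mathscr{L}$ is the usual Green's relation ($f\,\mathscr{L}\,g$ iff $\mathcal{T}_X^1 f=\mathcal{T}_X^1 g$, equivalently $\operatorname{Im}f=\operatorname{Im}g$). *)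

From mathcomp Require Import all_boot.
Set Implicit Arguments. Unset Strict Implicit. Unset Printing Implicit Defensive.

(* The full transformation semigroup T_X on a finite set X: maps X -> X,
   written on the right and composed left to right: (tcomp f g) x = g (f x),
   i.e. "f g" means first f, then g. *)
Definition tmap (X : finType) := {ffun X -> X}.

Definition tcomp (X : finType) (f g : tmap X) : tmap X := [ffun x => g (f x)].

Definition inRideal1 (X : finType) (f k : tmap X) : Prop :=
  k = f \/ exists h : tmap X, k = tcomp f h.

Definition inLideal1 (X : finType) (f k : tmap X) : Prop :=
  k = f \/ exists s : tmap X, k = tcomp s f.

Definition natle (X : finType) (f g : tmap X) : Prop :=
  (forall k, inRideal1 f k -> inRideal1 g k) /\
  exists alpha : tmap X, f = tcomp alpha f /\ f = tcomp alpha g.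

Definition in_down_Lideal (X : finType) (a x : tmap X) : Prop :=
  exists y, inLideal1 a y /\ natle x y.

Definition ordL (X : finType) (f g : tmap X) : Prop :=
  forall x, in_down_Lideal f x <-> in_down_Lideal g x.

Definition semL (X : finType) (f g : tmap X) : Prop :=
  forall k, inLideal1 f k <-> inLideal1 g k.

(* Every element below x in the natural order is a left multiple of it
   (x = alpha y), so the downward closure (a ∪ T_X a] is contained in the
   principal left ideal T_X^1 a and contains a itself.  Hence equal
   downward closures force f and g into each other's principal left ideals,
   and conversely equal principal left ideals trivially have equal
   downward closures. *)
From mathcomp Require Import all_boot.

Section NaturalOrderLeftIdeals.

Variable X : finType.
Implicit Types a f g x y : tmap X.

Lemma tcompA a f g : tcomp a (tcomp f g) = tcomp (tcomp a f) g.
Proof. by apply/ffunP => x; rewrite !ffunE. Qed.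

Lemma natle_refl f : natle f f.
Proof.
split=> //; exists [ffun x => x].
by split; apply/ffunP => x; rewrite !ffunE.
Qed.

Lemma inLideal1_refl a : inLideal1 a a.
Proof. by left. Qed.

Lemma inLideal1_trans a f g : inLideal1 a f -> inLideal1 f g -> inLideal1 a g.
Proof.
move=> [->|[s ->]] [->|[t ->]]; first exact: inLideal1_refl.
- by right; exists t.
- by right; exists s.
- by right; exists (tcomp t s); rewrite tcompA.
Qed.

Lemma natle_inLideal1 x y : natle x y -> inLideal1 y x.
Proof. by case=> _ [alpha [_ ->]]; right; exists alpha. Qed.

Lemma in_down_Lideal_refl a : in_down_Lideal a a.
Proof. by exists a; split; [exact: inLideal1_refl | exact: natle_refl]. Qed.

Lemma in_down_LidealW a x : in_down_Lideal a x -> inLideal1 a x.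
Proof. by case=> y [ay /natle_inLideal1 yx]; exact: inLideal1_trans ay yx. Qed.

Lemma ordL_inLideal1 f g : ordL f g -> inLideal1 g f.
Proof. by move=> fLg; apply/in_down_LidealW/fLg/in_down_Lideal_refl. Qed.

Lemma semL_mutual f g : inLideal1 g f -> inLideal1 f g -> semL f g.
Proof.
by move=> gf fg k; split; [exact: inLideal1_trans | exact: inLideal1_trans].
Qed.

Lemma semL_ordL f g : semL f g -> ordL f g.
Proof. by move=> fLg x; split=> -[y [/fLg ay yx]]; exists y. Qed.

End NaturalOrderLeftIdeals.

Theorem mainTheorem6 (X : finType) (f g : tmap X) :
  ordL f g <-> semL f g.
Proof.
split; last exact: semL_ordL.
move=> fLg; apply: semL_mutual; first exact: ordL_inLideal1 fLg.
by apply: ordL_inLideal1 => x; apply: iff_sym.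
Qed.
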